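(* Let $\lambda_j,\mu_j$ be real numbers with $0\le\lambda_j\le\mu_j$ for $j=0,\dots,n$. Then $\Phi_{(\lambda_0,\dots,\lambda_n)}(x)$ is real for all $x\in\mathbb{R}$, $\Phi_{(\lambda_0,\dots,\lambda_n)}(x)>0$ for all $x>0$, and $$\left|\Phi_{(\lambda_0,\dots,\lambda_n)}(z)\right|\le\Phi_{(\mu_0,\dots,\mu_n)}(|z|)\quad\text{for all }z\in\mathbb{C}.$$
   Context: For $\lambda_0,\dots,\lambda_n\in\mathbb{C}$ the fundamental function is the entire function $\Phi_{(\lambda_0,\dots,\lambda_n)}(z)=\frac{1}{2\pi i}\int_{|w|=R}\frac{e^{zw}}{(w-\lambda_0)\cdots(w-\lambda_n)}\,dw$, where $R>\max_j|\lambda_j|$ and the circle is positively oriented. *)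

From Stdlib Require Import Reals ClassicalEpsilon.
Open Scope R_scope.

Definition Cplx := (R * R)%type.
Definition RtoC (x : R) : Cplx := (x, 0).
Definition Re (z : Cplx) : R := fst z.
Definition Im (z : Cplx) : R := snd z.
Definition Cadd (z w : Cplx) : Cplx := (fst z + fst w, snd z + snd w).
Definition Csub (z w : Cplx) : Cplx := (fst z - fst w, snd z - snd w).
Definition Cmul (z w : Cplx) : Cplx :=
  (fst z * fst w - snd z * snd w, fst z * snd w + snd z * fst w).
Definition Cnorm (z : Cplx) : R := sqrt (fst z * fst z + snd z * snd z).
Definition Cinv (z : Cplx) : Cplx :=
  let d := fst z * fst z + snd z * snd z in (fst z / d, - snd z / d).
Definition Cdiv (z w : Cplx) : Cplx := Cmul z (Cinv w).
Definition Ci : Cplx := (0, 1).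
Definition Cexp (z : Cplx) : Cplx := (exp (fst z) * cos (snd z), exp (fst z) * sin (snd z)).

(* Total Riemann integral on [a,b]: RiemannInt if integrable, 0 otherwise. *)
Definition RInt (f : R -> R) (a b : R) : R :=
  match excluded_middle_informative (inhabited (Riemann_integrable f a b)) with
  | left h => RiemannInt (epsilon h (fun _ => True))
  | right _ => 0
  end.

(* Contour integral of f over the positively oriented circle |w| = r,
   parametrized by gamma(t) = r e^{it}, t in [0, 2 pi]:
   int_0^{2pi} f(gamma t) gamma'(t) dt, gamma'(t) = i r e^{it}. *)
Definition circle_integral (f : Cplx -> Cplx) (r : R) : Cplx :=
  let gamma t := Cmul (RtoC r) (Cexp (0, t)) in
  let h t := Cmul (f (gamma t)) (Cmul Ci (gamma t)) in
  (RInt (fun t => Re (h t)) 0 (2 * PI), RInt (fun t => Im (h t)) 0 (2 * PI)).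

Fixpoint max_abs (lam : nat -> Cplx) (n : nat) : R :=
  match n with
  | O => Cnorm (lam O)
  | S m => Rmax (max_abs lam m) (Cnorm (lam (S m)))
  end.

Fixpoint prod_lin (lam : nat -> Cplx) (n : nat) (w : Cplx) : Cplx :=
  match n with
  | O => Csub w (lam O)
  | S m => Cmul (prod_lin lam m w) (Csub w (lam (S m)))
  end.

(* Fundamental function Phi_(lam_0..lam_n)(z)
   = 1/(2 pi i) * int_{|w|=R} e^{zw} / prod_j (w - lam_j) dw,
   with the concrete choice R = max_j |lam_j| + 1 (> max_j |lam_j|). *)
Definition Phi (lam : nat -> Cplx) (n : nat) (z : Cplx) : Cplx :=
  Cmul (Cinv (Cmul (RtoC (2 * PI)) Ci))
       (circle_integral (fun w => Cdiv (Cexp (Cmul z w)) (prod_lin lam n w))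
                        (max_abs lam n + 1)).

(* For real nodes 0 <= lam_j, Phi_lam is an entire function whose
   Taylor coefficients are
       c_k(lam) = h_{k-n}(lam_0, ..., lam_n) / k!    (and 0 for k < n),
   where h_q is the complete homogeneous symmetric polynomial of degree q.
   These coefficients are nonnegative and nondecreasing in each lam_j, and
   c_n = 1/n!; the three claims follow at once from the Taylor expansion:
   Phi is real on the reals, Phi(x) >= c_n x^n > 0 for x > 0, and
   |Phi_lam(z)| <= sum c_k(lam) |z|^k <= sum c_k(mu) |z|^k = Phi_mu(|z|). *)

From Stdlib Require Import Reals Lra Lia ZArith ClassicalEpsilon.
From Coquelicot Require Import Coquelicot.
From Pilot Require Import Defs.
Open Scope R_scope.

Definition expi (th : R) : Cplx := (cos th, sin th).

Ltac cplx_ring := unfold Cmul, Cadd, Csub, RtoC, expi; simpl; f_equal; ring.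

Lemma Cmul_assoc a b c : Cmul (Cmul a b) c = Cmul a (Cmul b c).
Proof. cplx_ring. Qed.
Lemma Cmul_Csub_r a b c : Cmul a (Csub b c) = Csub (Cmul a b) (Cmul a c).
Proof. cplx_ring. Qed.
Lemma Cmul_Csub_l a b c : Cmul (Csub a b) c = Csub (Cmul a c) (Cmul b c).
Proof. cplx_ring. Qed.
Lemma Cmul_1_l a : Cmul (1,0) a = a.
Proof. destruct a; cplx_ring. Qed.
Lemma Cmul_1_r a : Cmul a (1,0) = a.
Proof. destruct a; cplx_ring. Qed.
Lemma RtoC_mul a b : Cmul (RtoC a) (RtoC b) = RtoC (a * b).
Proof. cplx_ring. Qed.

Lemma Cnorm2_neq0 a b : (a, b) <> (0, 0) -> a * a + b * b <> 0.
Proof.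
  intros Hab Hz; apply Hab.
  assert (a = 0) by nra; assert (b = 0) by nra; subst; reflexivity.
Qed.

Lemma Cinv_l x : x <> (0,0) -> Cmul (Defs.Cinv x) x = (1,0).
Proof.
  destruct x as [a b]; intros Hx; apply Cnorm2_neq0 in Hx.
  unfold Defs.Cinv, Cmul; simpl; f_equal; field; auto.
Qed.

Lemma Cinv_mul a b : a <> (0,0) -> b <> (0,0) ->
  Defs.Cinv (Cmul a b) = Cmul (Defs.Cinv a) (Defs.Cinv b).
Proof.
  destruct a as [a1 a2], b as [b1 b2]; intros Ha Hb.
  apply Cnorm2_neq0 in Ha; apply Cnorm2_neq0 in Hb.
  unfold Defs.Cinv, Cmul; simpl.
  assert (Hab : (a1 * b1 - a2 * b2) * (a1 * b1 - a2 * b2)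
                + (a1 * b2 + a2 * b1) * (a1 * b2 + a2 * b1)
                = (a1 * a1 + a2 * a2) * (b1 * b1 + b2 * b2)) by ring.
  rewrite Hab; f_equal; field; auto.
Qed.

Lemma expi_add a b : Cmul (expi a) (expi b) = expi (a + b).
Proof. unfold expi, Cmul; simpl; rewrite cos_plus, sin_plus; f_equal; ring. Qed.

Lemma Cnorm_Cmod z : Cnorm z = Cmod z.
Proof. unfold Cnorm, Cmod; f_equal; simpl; ring. Qed.

Lemma Cnorm_ge0 z : 0 <= Cnorm z.
Proof. apply sqrt_pos. Qed.
Lemma Cnorm_mul a b : Cnorm (Cmul a b) = Cnorm a * Cnorm b.
Proof. rewrite !Cnorm_Cmod; apply Cmod_mult. Qed.
Lemma Cnorm_add a b : Cnorm (Cadd a b) <= Cnorm a + Cnorm b.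
Proof. rewrite !Cnorm_Cmod; apply Cmod_triangle. Qed.
Lemma Cnorm_eq0 z : Cnorm z = 0 -> z = (0,0).
Proof. rewrite Cnorm_Cmod; apply Cmod_eq_0. Qed.
Lemma Cnorm_inv z : z <> (0,0) -> Cnorm (Defs.Cinv z) = / Cnorm z.
Proof.
  intros Hz.
  replace (Defs.Cinv z) with (Complex.Cinv z)
    by (unfold Defs.Cinv, Complex.Cinv; simpl; f_equal; f_equal; ring).
  rewrite !Cnorm_Cmod; apply Cmod_inv, Hz.
Qed.
Lemma nonzero_of_Cnorm x : 0 < Cnorm x -> x <> (0,0).
Proof.
  intros H ->; unfold Cnorm in H; simpl in H.
  rewrite Rmult_0_l, Rplus_0_l, sqrt_0 in H; lra.
Qed.

Lemma Cnorm_sub_sym a b : Cnorm (Csub a b) = Cnorm (Csub b a).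
Proof. unfold Cnorm, Csub; simpl; f_equal; ring. Qed.
Lemma Cnorm_RtoC x : Cnorm (RtoC x) = Rabs x.
Proof.
  unfold Cnorm, RtoC; simpl; rewrite Rmult_0_l, Rplus_0_r.
  apply sqrt_Rsqr_abs.
Qed.
Lemma Cnorm_expi th : Cnorm (expi th) = 1.
Proof.
  unfold Cnorm, expi; simpl; rewrite <- sqrt_1; f_equal.
  pose proof (sin2_cos2 th); unfold Rsqr in *; lra.
Qed.

Lemma Cnorm_polar a b : Cnorm (a * cos b, a * sin b) = Rabs a.
Proof.
  replace (a * cos b, a * sin b) with (Cmul (RtoC a) (expi b)) by cplx_ring.
  rewrite Cnorm_mul, Cnorm_RtoC, Cnorm_expi; ring.
Qed.

Lemma Rabs_fst_le z : Rabs (fst z) <= Cnorm z.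
Proof.
  unfold Cnorm; rewrite <- sqrt_Rsqr_abs; apply sqrt_le_1_alt.
  pose proof (Rle_0_sqr (snd z)); unfold Rsqr in *; lra.
Qed.
Lemma Rabs_snd_le z : Rabs (snd z) <= Cnorm z.
Proof.
  unfold Cnorm; rewrite <- sqrt_Rsqr_abs; apply sqrt_le_1_alt.
  pose proof (Rle_0_sqr (fst z)); unfold Rsqr in *; lra.
Qed.
Lemma Cnorm_le_abs_sum z : Cnorm z <= Rabs (fst z) + Rabs (snd z).
Proof.
  pose proof (Rabs_pos (fst z)); pose proof (Rabs_pos (snd z)).
  unfold Cnorm; rewrite <- (sqrt_Rsqr (Rabs (fst z) + Rabs (snd z))) by lra.
  apply sqrt_le_1_alt.
  pose proof (Rsqr_abs (fst z)); pose proof (Rsqr_abs (snd z)).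
  unfold Rsqr in *; nra.
Qed.

Fixpoint csum (f : nat -> Cplx) (N : nat) : Cplx :=
  match N with O => f O | S M => Cadd (csum f M) (f (S M)) end.

Lemma csum_ext (f g : nat -> Cplx) N :
  (forall k, (k <= N)%nat -> f k = g k) -> csum f N = csum g N.
Proof.
  induction N; intros H; simpl; [apply H; lia|].
  rewrite IHN, H; auto; intros; apply H; lia.
Qed.
Lemma csum_mul_l c (f : nat -> Cplx) N :
  csum (fun k => Cmul c (f k)) N = Cmul c (csum f N).
Proof. induction N; simpl; auto; rewrite IHN; cplx_ring. Qed.
Lemma csum_mul_r (f : nat -> Cplx) b N :
  csum (fun k => Cmul (f k) b) N = Cmul (csum f N) b.
Proof. induction N; simpl; auto; rewrite IHN; cplx_ring. Qed.
Lemma csum_RtoC (f : nat -> R) N :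
  csum (fun k => RtoC (f k)) N = RtoC (sum_f_R0 f N).
Proof. induction N; simpl; auto; rewrite IHN; cplx_ring. Qed.
Lemma Cnorm_csum f N :
  Cnorm (csum f N) <= sum_f_R0 (fun k => Cnorm (f k)) N.
Proof. induction N; simpl; [lra|]; eapply Rle_trans; [apply Cnorm_add|lra]. Qed.

Definition cint (F : R -> Cplx) : Cplx :=
  (RInt.RInt (fun t => fst (F t)) 0 (2*PI), RInt.RInt (fun t => snd (F t)) 0 (2*PI)).

Definition ccont (F : R -> Cplx) :=
  forall t, continuous (fun s => fst (F s)) t /\ continuous (fun s => snd (F s)) t.

(* Continuity rules for real functions, with the functions made explicit so
   that Coquelicot's generic lemmas apply. *)
Lemma rcont_plus (f g : R -> R) t :
  continuous f t -> continuous g t -> continuous (fun s => f s + g s) t.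
Proof. intros; apply (continuous_plus f g); auto. Qed.
Lemma rcont_mult (f g : R -> R) t :
  continuous f t -> continuous g t -> continuous (fun s => f s * g s) t.
Proof. intros; apply (continuous_mult f g); auto. Qed.
Lemma rcont_minus (f g : R -> R) t :
  continuous f t -> continuous g t -> continuous (fun s => f s - g s) t.
Proof. intros; apply rcont_plus; auto; apply (continuous_opp g); auto. Qed.
Lemma rcont_div (f g : R -> R) t :
  continuous f t -> continuous g t -> g t <> 0 -> continuous (fun s => f s / g s) t.
Proof.
  intros; apply rcont_mult; auto.
  apply (continuous_comp g Rinv); auto; apply continuous_Rinv; auto.
Qed.
Lemma rcont_linear (a t : R) : continuous (fun s => a * s) t.
Proof. apply rcont_mult; [apply continuous_const|apply continuous_id]. Qed.

Lemma ccont_ext F G : (forall t, F t = G t) -> ccont F -> ccont G.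
Proof.
  intros H HF t; destruct (HF t); split;
  [apply (continuous_ext (fun s => fst (F s)))|apply (continuous_ext (fun s => snd (F s)))];
  auto; intros; rewrite H; auto.
Qed.
Lemma ccont_const c : ccont (fun _ => c).
Proof. intros t; split; apply continuous_const. Qed.
Lemma ccont_add F G : ccont F -> ccont G -> ccont (fun t => Cadd (F t) (G t)).
Proof. intros HF HG t; destruct (HF t), (HG t); simpl; split; apply rcont_plus; auto. Qed.
Lemma ccont_sub F G : ccont F -> ccont G -> ccont (fun t => Csub (F t) (G t)).
Proof. intros HF HG t; destruct (HF t), (HG t); simpl; split; apply rcont_minus; auto. Qed.
Lemma ccont_mul F G : ccont F -> ccont G -> ccont (fun t => Cmul (F t) (G t)).
Proof.
  intros HF HG t; destruct (HF t), (HG t); simpl; split;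
  [apply rcont_minus|apply rcont_plus]; apply rcont_mult; auto.
Qed.
Lemma ccont_inv F : ccont F -> (forall t, F t <> (0,0)) -> ccont (fun t => Defs.Cinv (F t)).
Proof.
  intros HF Hn t; destruct (HF t) as [H1 H2]; unfold Defs.Cinv; simpl.
  assert (Hd : fst (F t) * fst (F t) + snd (F t) * snd (F t) <> 0)
    by (apply Cnorm2_neq0; rewrite <- surjective_pairing; apply Hn).
  assert (Hc : continuous (fun s => fst (F s) * fst (F s) + snd (F s) * snd (F s)) t)
    by (apply rcont_plus; apply rcont_mult; auto).
  split; apply rcont_div; auto; apply (continuous_opp (fun s => snd (F s))); auto.
Qed.
Lemma ccont_expi a : ccont (fun t => expi (a * t)).
Proof.
  intros t; unfold expi; simpl; split.
  - apply continuous_cos_comp, rcont_linear.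
  - apply (continuous_comp (fun s => a * s) sin); [apply rcont_linear|apply continuous_sin].
Qed.
Lemma ccont_Cexp F : ccont F -> ccont (fun t => Cexp (F t)).
Proof.
  intros HF t; destruct (HF t) as [H1 H2]; unfold Cexp; simpl.
  assert (He : continuous (fun s => exp (fst (F s))) t) by (apply continuous_exp_comp, H1).
  split; apply rcont_mult; auto.
  - apply continuous_cos_comp, H2.
  - apply (continuous_comp (fun s => snd (F s)) sin); [apply H2|apply continuous_sin].
Qed.
Lemma ccont_csum (phi : nat -> R -> Cplx) N :
  (forall k, ccont (phi k)) -> ccont (fun t => csum (fun k => phi k t) N).
Proof. intros H; induction N; simpl; [apply H|apply ccont_add; auto]. Qed.

Lemma ex_RInt_cont (f : R -> R) : (forall t, continuous f t) -> ex_RInt f 0 (2*PI).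
Proof. intros H; apply (ex_RInt_continuous (V:=R_CompleteNormedModule)); intros; apply H. Qed.
Lemma ex_RInt_fst F : ccont F -> ex_RInt (fun t => fst (F t)) 0 (2*PI).
Proof. intros H; apply ex_RInt_cont; intros t; apply H. Qed.
Lemma ex_RInt_snd F : ccont F -> ex_RInt (fun t => snd (F t)) 0 (2*PI).
Proof. intros H; apply ex_RInt_cont; intros t; apply H. Qed.

Lemma cint_ext F G : (forall t, F t = G t) -> cint F = cint G.
Proof. intros H; unfold cint; f_equal; apply RInt_ext; intros; rewrite H; auto. Qed.

Lemma cint_add F G : ccont F -> ccont G ->
  cint (fun t => Cadd (F t) (G t)) = Cadd (cint F) (cint G).
Proof.
  intros HF HG; unfold cint, Cadd; simpl; f_equal;
  [exact (RInt_plus _ _ _ _ (ex_RInt_fst F HF) (ex_RInt_fst G HG))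
  |exact (RInt_plus _ _ _ _ (ex_RInt_snd F HF) (ex_RInt_snd G HG))].
Qed.
Lemma cint_sub F G : ccont F -> ccont G ->
  cint (fun t => Csub (F t) (G t)) = Csub (cint F) (cint G).
Proof.
  intros HF HG; unfold cint, Csub; simpl; f_equal;
  [exact (RInt_minus _ _ _ _ (ex_RInt_fst F HF) (ex_RInt_fst G HG))
  |exact (RInt_minus _ _ _ _ (ex_RInt_snd F HF) (ex_RInt_snd G HG))].
Qed.
Lemma cint_cmul c F : ccont F -> cint (fun t => Cmul c (F t)) = Cmul c (cint F).
Proof.
  intros HF; unfold cint, Cmul; simpl.
  assert (e1 := ex_RInt_fst F HF); assert (e2 := ex_RInt_snd F HF).
  assert (Hscal : forall a (f : R -> R), ex_RInt f 0 (2*PI) ->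
            RInt.RInt (fun t => a * f t) 0 (2*PI) = a * RInt.RInt f 0 (2*PI))
    by (intros a f Hf; exact (RInt_scal f _ _ a Hf)).
  assert (Hex : forall a (f : R -> R), ex_RInt f 0 (2*PI) -> ex_RInt (fun t => a * f t) 0 (2*PI))
    by (intros a f Hf; exact (ex_RInt_scal f _ _ a Hf)).
  f_equal.
  - rewrite (RInt_minus (fun t => fst c * fst (F t)) (fun t => snd c * snd (F t)));
      [|apply Hex; auto|apply Hex; auto].
    rewrite !Hscal; auto.
  - rewrite (RInt_plus (fun t => fst c * snd (F t)) (fun t => snd c * fst (F t)));
      [|apply Hex; auto|apply Hex; auto].
    rewrite !Hscal; auto.
Qed.

(* Standard estimate |int F| <= 4 pi sup |F| (the 4 instead of 2 comes from
   estimating the two components separately). *)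
Lemma cint_bound F K : ccont F -> (forall t, Cnorm (F t) <= K) -> Cnorm (cint F) <= 4*PI*K.
Proof.
  intros HF HK; pose proof PI_RGT_0.
  assert (Hcomp : forall f : R -> R, ex_RInt f 0 (2*PI) -> (forall t, Rabs (f t) <= K) ->
            Rabs (RInt.RInt f 0 (2*PI)) <= 2*PI*K).
  { intros f Hf Hb; replace (2*PI*K) with ((2*PI - 0)*K) by ring.
    apply abs_RInt_le_const; auto; lra. }
  eapply Rle_trans; [apply Cnorm_le_abs_sum|]; unfold cint; simpl.
  assert (Rabs (RInt.RInt (fun t => fst (F t)) 0 (2*PI)) <= 2*PI*K).
  { apply Hcomp; [apply ex_RInt_fst; auto|intros t; eapply Rle_trans; [apply Rabs_fst_le|auto]]. }
  assert (Rabs (RInt.RInt (fun t => snd (F t)) 0 (2*PI)) <= 2*PI*K).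
  { apply Hcomp; [apply ex_RInt_snd; auto|intros t; eapply Rle_trans; [apply Rabs_snd_le|auto]]. }
  lra.
Qed.

Lemma cint_csum (phi : nat -> R -> Cplx) N : (forall k, ccont (phi k)) ->
  cint (fun t => csum (fun k => phi k t) N) = csum (fun k => cint (phi k)) N.
Proof.
  intros H; induction N; simpl; auto.
  rewrite cint_add, IHN; auto; apply ccont_csum; auto.
Qed.

Definition Clim (u : nat -> Cplx) (L : Cplx) :=
  forall eps, 0 < eps -> exists N0, forall N, (N0 <= N)%nat -> Cnorm (Csub L (u N)) <= eps.
Definition Cunif (u : nat -> R -> Cplx) (A : R -> Cplx) :=
  forall eps, 0 < eps -> exists N0, forall N, (N0 <= N)%nat ->
    forall t, Cnorm (Csub (A t) (u N t)) <= eps.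

Lemma Clim_eventually_const (L c : Cplx) (u : nat -> Cplx) :
  Clim u L -> (exists N1, forall N, (N1 <= N)%nat -> u N = c) -> L = c.
Proof.
  intros H [N1 HN1].
  assert (Hz : Cnorm (Csub L c) = 0).
  { apply Rle_antisym; [|apply Cnorm_ge0]; apply Rnot_lt_le; intros Hlt.
    destruct (H (Cnorm (Csub L c) / 2)) as [N0 HN0]; [lra|].
    specialize (HN0 (Nat.max N0 N1) ltac:(lia)); rewrite HN1 in HN0 by lia; lra. }
  apply Cnorm_eq0 in Hz; destruct L, c; unfold Csub in Hz; simpl in Hz.
  injection Hz; intros; f_equal; lra.
Qed.

Lemma cint_series (A B : R -> Cplx) (phi : nat -> R -> Cplx) K :
  ccont A -> ccont B -> (forall k, ccont (phi k)) -> (forall t, Cnorm (B t) <= K) ->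
  Cunif (fun N t => csum (fun k => phi k t) N) A ->
  Clim (fun N => csum (fun k => cint (fun t => Cmul (phi k t) (B t))) N)
       (cint (fun t => Cmul (A t) (B t))).
Proof.
  intros HA HB Hphi HK Hconv eps Heps.
  assert (K0 : 0 <= K) by (eapply Rle_trans; [apply Cnorm_ge0|apply (HK 0)]).
  pose proof PI_RGT_0.
  set (d := eps / (4*PI*(K+1))).
  assert (Hd : 0 < d) by (apply Rdiv_lt_0_compat; auto; nra).
  destruct (Hconv d Hd) as [N0 HN0]; exists N0; intros N HN.
  assert (Hc : forall k, ccont (fun t => Cmul (phi k t) (B t))) by (intros; apply ccont_mul; auto).
  rewrite <- (cint_csum _ N Hc), <- cint_sub by (auto using ccont_mul, ccont_csum).
  rewrite (cint_ext _ (fun t => Cmul (Csub (A t) (csum (fun k => phi k t) N)) (B t)))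
    by (intros t; rewrite Cmul_Csub_l, csum_mul_r; auto).
  eapply Rle_trans.
  - apply cint_bound with (K := d * K); [auto using ccont_mul, ccont_sub, ccont_csum|].
    intros t; rewrite Cnorm_mul; apply Rmult_le_compat; auto using Cnorm_ge0.
  - replace (4 * PI * (d * K)) with (eps * (K / (K+1))) by (unfold d; field; lra).
    assert (K / (K+1) <= 1) by (apply Rmult_le_reg_r with (K+1); [lra|field_simplify; lra]).
    nra.
Qed.

Lemma RInt_Defs_eq (f : R -> R) :
  (forall t, continuous f t) -> Defs.RInt f 0 (2*PI) = RInt.RInt f 0 (2*PI).
Proof.
  intros Hc; unfold Defs.RInt; destruct excluded_middle_informative as [h|h].
  - rewrite (RInt_Reals f 0 (2*PI) (epsilon h (fun _ => True))); auto.
  - exfalso; apply h; constructor; apply ex_RInt_Reals_0, ex_RInt_cont; auto.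
Qed.

Lemma sin_2pi_mult (p : Z) : sin (IZR p * (2*PI)) = 0.
Proof. apply sin_eq_0_1; exists (2*p)%Z; rewrite mult_IZR; simpl; ring. Qed.
Lemma cos_2pi_mult (p : Z) : cos (IZR p * (2*PI)) = 1.
Proof.
  replace (IZR p * (2*PI)) with (2 * (IZR p * PI)) by ring.
  rewrite cos_2a_sin, sin_eq_0_1; [ring|exists p; auto].
Qed.

Lemma RInt_derive_periodic (F f : R -> R) :
  (forall x, is_derive F x (f x)) -> (forall x, continuous f x) -> F (2*PI) = F 0 ->
  RInt.RInt f 0 (2*PI) = 0.
Proof.
  intros HF Hf Hper.
  rewrite (is_RInt_unique _ _ _ _ (is_RInt_derive F f 0 (2*PI) (fun x _ => HF x) (fun x _ => Hf x))).
  rewrite Hper; unfold minus, plus, opp; simpl; ring.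
Qed.

Lemma RInt_cos_mult (p : Z) : p <> 0%Z -> RInt.RInt (fun t => cos (IZR p * t)) 0 (2*PI) = 0.
Proof.
  intros Hp; assert (Hp' : IZR p <> 0) by (apply not_0_IZR; auto).
  apply (RInt_derive_periodic (fun t => sin (IZR p * t) / IZR p)).
  - intros x; auto_derive; [auto|field; auto].
  - intros x; apply continuous_cos_comp, rcont_linear.
  - rewrite sin_2pi_mult, Rmult_0_r, sin_0; reflexivity.
Qed.
Lemma RInt_sin_mult (p : Z) : p <> 0%Z -> RInt.RInt (fun t => sin (IZR p * t)) 0 (2*PI) = 0.
Proof.
  intros Hp; assert (Hp' : IZR p <> 0) by (apply not_0_IZR; auto).
  apply (RInt_derive_periodic (fun t => - cos (IZR p * t) / IZR p)).
  - intros x; auto_derive; [auto|field; auto].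
  - intros x; apply (continuous_comp (fun s => IZR p * s) sin);
      [apply rcont_linear|apply continuous_sin].
  - rewrite cos_2pi_mult, Rmult_0_r, cos_0; reflexivity.
Qed.

Lemma cint_expi (p : Z) :
  cint (fun t => expi (IZR p * t)) = if Z.eqb p 0 then RtoC (2*PI) else (0,0).
Proof.
  destruct (Z.eqb_spec p 0) as [->|Hp].
  - unfold cint, expi, RtoC; simpl; f_equal.
    + rewrite (RInt_ext _ (fun _ => 1)) by (intros; rewrite Rmult_0_l, cos_0; auto).
      rewrite RInt_const; unfold scal; simpl; unfold mult; simpl; ring.
    + rewrite (RInt_ext _ (fun _ => 0)) by (intros; rewrite Rmult_0_l, sin_0; auto).
      rewrite RInt_const; unfold scal; simpl; unfold mult; simpl; ring.
  - unfold cint, expi; simpl; rewrite RInt_cos_mult, RInt_sin_mult; auto.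
Qed.

Definition circ (r t : R) : Cplx := Cmul (RtoC r) (expi t).

Lemma Cnorm_circ r t : 0 <= r -> Cnorm (circ r t) = r.
Proof. intros; unfold circ; rewrite Cnorm_mul, Cnorm_expi, Cnorm_RtoC, Rabs_right; lra. Qed.
Lemma ccont_circ r : ccont (circ r).
Proof.
  apply ccont_mul; [apply ccont_const|].
  apply (ccont_ext (fun t => expi (1 * t))); [intros; rewrite Rmult_1_l; auto|apply ccont_expi].
Qed.

Lemma circ_sub_ge1 r l t : 0 <= l -> l + 1 <= r -> 1 <= Cnorm (Csub (circ r t) (RtoC l)).
Proof.
  intros Hl Hr.
  assert (H : circ r t = Cadd (Csub (circ r t) (RtoC l)) (RtoC l)) by (unfold circ; cplx_ring).
  pose proof (Cnorm_add (Csub (circ r t) (RtoC l)) (RtoC l)) as Htri; rewrite <- H in Htri.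
  rewrite Cnorm_circ, Cnorm_RtoC, Rabs_right in Htri; lra.
Qed.

Lemma circle_integral_cint (f : Cplx -> Cplx) r :
  ccont (fun t => Cmul (f (circ r t)) (Cmul Ci (circ r t))) ->
  circle_integral f r = cint (fun t => Cmul (f (circ r t)) (Cmul Ci (circ r t))).
Proof.
  intros Hc; unfold circle_integral, cint.
  assert (Hg : forall t, Cmul (RtoC r) (Cexp (0, t)) = circ r t)
    by (intros t; unfold circ, Cexp, expi; simpl; rewrite exp_0, !Rmult_1_l; auto).
  unfold Defs.Re, Defs.Im; cbv zeta; apply injective_projections; cbn [fst snd].
  - rewrite RInt_Defs_eq; [apply RInt_ext; intros t _; rewrite Hg; auto|].
    intros t; eapply continuous_ext; [|apply (proj1 (Hc t))]; intros; cbv beta; rewrite Hg; auto.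
  - rewrite RInt_Defs_eq; [apply RInt_ext; intros t _; rewrite Hg; auto|].
    intros t; eapply continuous_ext; [|apply (proj2 (Hc t))]; intros; cbv beta; rewrite Hg; auto.
Qed.

(* Geometric expansion on the circle |w| = r of 1 / (w - l), for 0 <= l and
   l + 1 <= r:  1 / (r e^{it} - l) = sum_k l^k r^{-(k+1)} e^{-i(k+1)t}. *)
Section GeometricExpansion.

Variables r l : R.
Hypothesis l_ge0 : 0 <= l.
Hypothesis r_large : l + 1 <= r.

Definition geo_term (k : nat) (t : R) : Cplx :=
  Cmul (RtoC (l^k * (/r)^(k+1))) (expi (-(INR k + 1) * t)).

Definition geo_rem (k : nat) (t : R) : Cplx :=
  Cmul (RtoC (l^k * (/r)^k)) (expi (-(INR k) * t)).

Lemma geo_term_telescope k t :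
  Cmul (Csub (circ r t) (RtoC l)) (geo_term k t) = Csub (geo_rem k t) (geo_rem (S k) t).
Proof.
  assert (Hr : r <> 0) by lra.
  unfold geo_term; set (c := l^k * (/r)^(k+1)).
  transitivity (Csub (Cmul (RtoC (r * c)) (Cmul (expi t) (expi (-(INR k + 1) * t))))
                     (Cmul (RtoC (l * c)) (expi (-(INR k + 1) * t))));
    [unfold circ; cplx_ring|].
  rewrite expi_add; unfold geo_rem; rewrite S_INR.
  replace (t + - (INR k + 1) * t) with (- INR k * t) by ring.
  replace (r * c) with (l^k * (/r)^k) by (unfold c; rewrite pow_add; simpl; field; auto).
  replace (l * c) with (l^(S k) * (/r)^(S k)) by (unfold c; rewrite Nat.add_1_r; simpl; ring).
  reflexivity.
Qed.

Lemma csum_telescope (q : nat -> Cplx) N :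
  csum (fun k => Csub (q k) (q (S k))) N = Csub (q O) (q (S N)).
Proof.
  induction N; simpl; auto; rewrite IHN.
  destruct (q O), (q (S N)), (q (S (S N))); unfold Cadd, Csub; simpl; f_equal; ring.
Qed.

Lemma geo_partial_sum t N :
  Cmul (Csub (circ r t) (RtoC l)) (csum (fun k => geo_term k t) N) = Csub (1,0) (geo_rem (S N) t).
Proof.
  rewrite <- csum_mul_l.
  rewrite (csum_ext _ (fun k => Csub (geo_rem k t) (geo_rem (S k) t)))
    by (intros; apply geo_term_telescope).
  rewrite csum_telescope; f_equal.
  unfold geo_rem; simpl; rewrite Ropp_0, Rmult_0_l; unfold expi; rewrite cos_0, sin_0; cplx_ring.
Qed.

Lemma geo_unif : Cunif (fun N t => csum (fun k => geo_term k t) N)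
                      (fun t => Defs.Cinv (Csub (circ r t) (RtoC l))).
Proof.
  intros eps Heps.
  assert (Hq : Rabs (l/r) < 1).
  { rewrite Rabs_right; [|apply Rle_ge, Rmult_le_pos; auto; left; apply Rinv_0_lt_compat; lra].
    apply Rmult_lt_reg_r with r; [lra|]; unfold Rdiv; rewrite Rmult_assoc, Rinv_l; lra. }
  destruct (pow_lt_1_zero _ Hq eps Heps) as [N0 HN0]; exists N0; intros N HN t.
  set (x := Csub (circ r t) (RtoC l)); set (Sn := csum (fun k => geo_term k t) N).
  assert (Hx : 1 <= Cnorm x) by (apply circ_sub_ge1; auto).
  assert (Hx0 : x <> (0,0)) by (apply nonzero_of_Cnorm; lra).
  (* 1/x - Sn = (1/x) (1 - x Sn) = (1/x) geo_rem (N+1) *)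
  assert (HD : Csub (Defs.Cinv x) Sn = Cmul (Defs.Cinv x) (geo_rem (S N) t)).
  { replace (geo_rem (S N) t) with (Csub (1,0) (Cmul x Sn))
      by (unfold x, Sn; rewrite geo_partial_sum; destruct (geo_rem (S N) t); cplx_ring).
    rewrite Cmul_Csub_r, <- Cmul_assoc, Cinv_l, Cmul_1_l, Cmul_1_r; auto. }
  rewrite HD, Cnorm_mul, Cnorm_inv by auto.
  unfold geo_rem; rewrite Cnorm_mul, Cnorm_RtoC, Cnorm_expi, <- Rpow_mult_distr.
  assert (0 < / Cnorm x <= 1)
    by (split; [apply Rinv_0_lt_compat; lra|rewrite <- Rinv_1; apply Rinv_le_contravar; lra]).
  assert (Hp : Rabs ((l / r) ^ S N) < eps) by (apply HN0; lia).
  pose proof (Rabs_pos ((l / r) ^ S N)); unfold Rdiv in *; nra.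
Qed.

Lemma ccont_geo_term k : ccont (geo_term k).
Proof. apply ccont_mul; [apply ccont_const|apply ccont_expi]. Qed.

End GeometricExpansion.

Fixpoint prod_nodes (lam : nat -> R) (m : nat) (w : Cplx) : Cplx :=
  match m with O => (1,0) | S k => Cmul (prod_nodes lam k w) (Csub w (RtoC (lam k))) end.

Lemma prod_lin_nodes lam n w :
  prod_lin (fun j => RtoC (lam j)) n w = prod_nodes lam (S n) w.
Proof. induction n; simpl; [rewrite Cmul_1_l|rewrite IHn]; auto. Qed.

Definition nodes_inside (lam : nat -> R) (r : R) (m : nat) :=
  forall j, (j < m)%nat -> 0 <= lam j /\ lam j + 1 <= r.

Definition inv_prod (lam : nat -> R) (r : R) (m : nat) (t : R) : Cplx :=
  Defs.Cinv (prod_nodes lam m (circ r t)).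

(* Complete homogeneous symmetric polynomial of degree q in lam_0..lam_{m-1},
   via h_{m+1}(q) = sum_{i<=q} lam_m^i h_m(q-i). *)
Fixpoint hcomp (lam : nat -> R) (m q : nat) : R :=
  match m with
  | O => if Nat.eqb q 0 then 1 else 0
  | S k => sum_f_R0 (fun i => lam k ^ i * hcomp lam k (q - i)) q
  end.

(* The p-th Fourier coefficient int_0^{2pi} e^{ipt} / prod_{j<m}(r e^{it} - lam_j) dt:
   it is 2 pi h_m(p - m) r^{-p} for p >= m, and 0 otherwise. *)
Definition inv_prod_coef (lam : nat -> R) (r : R) (m : nat) (p : Z) : R :=
  if (p <? Z.of_nat m)%Z then 0
  else 2*PI * hcomp lam m (Z.to_nat (p - Z.of_nat m)) * (/r)^(Z.to_nat p).

Section InverseProduct.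

Variables (lam : nat -> R) (r : R).

Lemma nodes_inside_pred m : nodes_inside lam r (S m) -> nodes_inside lam r m.
Proof. intros H j Hj; apply H; lia. Qed.

Lemma prod_nodes_ge1 m t : nodes_inside lam r m -> 1 <= Cnorm (prod_nodes lam m (circ r t)).
Proof.
  induction m; intros H; simpl.
  - unfold Cnorm; simpl; rewrite Rmult_0_l, Rplus_0_r, Rmult_1_l, sqrt_1; lra.
  - rewrite Cnorm_mul.
    assert (1 <= Cnorm (prod_nodes lam m (circ r t))) by (apply IHm, nodes_inside_pred, H).
    assert (1 <= Cnorm (Csub (circ r t) (RtoC (lam m)))) by (apply circ_sub_ge1; apply H; lia).
    nra.
Qed.

Lemma prod_nodes_nonzero m t : nodes_inside lam r m -> prod_nodes lam m (circ r t) <> (0,0).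
Proof. intros H; apply nonzero_of_Cnorm; pose proof (prod_nodes_ge1 m t H); lra. Qed.

Lemma ccont_inv_prod m : nodes_inside lam r m -> ccont (inv_prod lam r m).
Proof.
  intros H; apply ccont_inv; [|intros t; apply prod_nodes_nonzero, H].
  induction m; simpl; [apply ccont_const|].
  apply ccont_mul; [apply IHm, nodes_inside_pred, H|apply ccont_sub; [apply ccont_circ|apply ccont_const]].
Qed.

Lemma inv_prod_norm m t : nodes_inside lam r m -> Cnorm (inv_prod lam r m t) <= 1.
Proof.
  intros H; pose proof (prod_nodes_ge1 m t H); unfold inv_prod.
  rewrite Cnorm_inv by (apply prod_nodes_nonzero, H).
  rewrite <- Rinv_1; apply Rinv_le_contravar; lra.
Qed.

Lemma inv_prod_succ m t : nodes_inside lam r (S m) ->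
  inv_prod lam r (S m) t = Cmul (inv_prod lam r m t) (Defs.Cinv (Csub (circ r t) (RtoC (lam m)))).
Proof.
  intros H; unfold inv_prod; simpl; apply Cinv_mul.
  - apply prod_nodes_nonzero, nodes_inside_pred, H.
  - apply nonzero_of_Cnorm; pose proof (circ_sub_ge1 r (lam m) t ltac:(apply H; lia) ltac:(apply H; lia)); lra.
Qed.

Lemma sum_f_R0_trunc (f : nat -> R) Q N :
  (forall k, (Q < k)%nat -> f k = 0) -> (Q <= N)%nat -> sum_f_R0 f N = sum_f_R0 f Q.
Proof.
  intros H; induction N; intros HN.
  - replace Q with 0%nat by lia; auto.
  - destruct (Nat.eq_dec Q (S N)) as [->|]; auto.
    simpl; rewrite IHN, H by lia; ring.
Qed.

(* The recurrence for the coefficients when one more node is added: it is the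
   Cauchy product with the geometric coefficients lam_m^k r^{-(k+1)}. *)
Lemma inv_prod_coef_succ m p N : 0 < r ->
  (Z.to_nat (p - Z.of_nat m - 1) <= N)%nat ->
  sum_f_R0 (fun k => lam m ^ k * (/r)^(k+1) * inv_prod_coef lam r m (p - Z.of_nat k - 1)) N
  = inv_prod_coef lam r (S m) p.
Proof.
  intros Hr HN; unfold inv_prod_coef at 2; destruct (Z.ltb_spec p (Z.of_nat (S m))).
  - rewrite (sum_eq _ (fun _ => 0)), sum_cte; [ring|].
    intros k _; unfold inv_prod_coef; destruct (Z.ltb_spec (p - Z.of_nat k - 1) (Z.of_nat m)); [ring|lia].
  - set (Q := Z.to_nat (p - Z.of_nat (S m))).
    replace (Z.to_nat (p - Z.of_nat m - 1)) with Q in HN by (unfold Q; lia).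
    rewrite (sum_f_R0_trunc _ Q N); auto.
    2:{ intros k Hk; unfold inv_prod_coef.
        destruct (Z.ltb_spec (p - Z.of_nat k - 1) (Z.of_nat m)); [ring|lia]. }
    simpl hcomp.
    replace (2 * PI * sum_f_R0 (fun i => lam m ^ i * hcomp lam m (Q - i)) Q * (/ r) ^ Z.to_nat p)
      with ((2 * PI * (/ r) ^ Z.to_nat p) * sum_f_R0 (fun i => lam m ^ i * hcomp lam m (Q - i)) Q)
      by ring.
    rewrite scal_sum; apply sum_eq; intros k Hk; unfold inv_prod_coef.
    destruct (Z.ltb_spec (p - Z.of_nat k - 1) (Z.of_nat m)); [lia|].
    replace (Z.to_nat (p - Z.of_nat k - 1 - Z.of_nat m)) with (Q - k)%nat by (unfold Q; lia).
    replace (Z.to_nat p) with ((k+1) + Z.to_nat (p - Z.of_nat k - 1))%nat by lia.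
    rewrite !pow_add; ring.
Qed.

(* The Fourier coefficients of inv_prod, by induction on the number of
   factors: each new factor 1/(r e^{it} - lam_m) is expanded in its
   geometric series and integrated term by term. *)
Lemma cint_inv_prod m : 0 < r -> nodes_inside lam r m -> forall p : Z,
  cint (fun t => Cmul (expi (IZR p * t)) (inv_prod lam r m t)) = RtoC (inv_prod_coef lam r m p).
Proof.
  intros Hr; induction m; intros Hm p.
  - rewrite (cint_ext _ (fun t => expi (IZR p * t))).
    2:{ intros t; unfold inv_prod; simpl; unfold Defs.Cinv; simpl.
        replace (1/(1*1+0*0)) with 1 by field; replace (-0/(1*1+0*0)) with 0 by field.
        destruct (expi (IZR p * t)); cplx_ring. }
    rewrite cint_expi; unfold inv_prod_coef; simpl hcomp.
    destruct (Z.eqb_spec p 0) as [->|Hp]; [simpl; f_equal; ring|].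
    destruct (Z.ltb_spec p (Z.of_nat 0)); [reflexivity|].
    rewrite (proj2 (Nat.eqb_neq (Z.to_nat (p - 0)) 0)) by lia; unfold RtoC; f_equal; ring.
  - assert (Hm' := nodes_inside_pred m Hm).
    assert (Hl : 0 <= lam m /\ lam m + 1 <= r) by (apply Hm; lia).
    set (A := fun t => Defs.Cinv (Csub (circ r t) (RtoC (lam m)))).
    set (B := fun t => Cmul (expi (IZR p * t)) (inv_prod lam r m t)).
    rewrite (cint_ext _ (fun t => Cmul (A t) (B t)))
      by (intros t; rewrite inv_prod_succ by auto; unfold A, B; cplx_ring).
    assert (HA : ccont A).
    { apply ccont_inv; [apply ccont_sub; [apply ccont_circ|apply ccont_const]|].
      intros t; apply nonzero_of_Cnorm; pose proof (circ_sub_ge1 r (lam m) t ltac:(lra) ltac:(lra)); lra. }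
    assert (HB : ccont B) by (apply ccont_mul; [apply (ccont_expi (IZR p))|apply ccont_inv_prod; auto]).
    assert (HBn : forall t, Cnorm (B t) <= 1).
    { intros t; unfold B; rewrite Cnorm_mul, Cnorm_expi; pose proof (inv_prod_norm m t Hm'); lra. }
    apply (Clim_eventually_const _ _ _
             (cint_series A B (geo_term r (lam m)) 1 HA HB (ccont_geo_term r (lam m)) HBn
                          (geo_unif r (lam m) ltac:(lra) ltac:(lra)))).
    exists (Z.to_nat (p - Z.of_nat m - 1)); intros N HN.
    rewrite <- inv_prod_coef_succ with (N := N), <- csum_RtoC by auto.
    apply csum_ext; intros k _.
    rewrite <- RtoC_mul, <- IHm, <- cint_cmul by auto using ccont_mul, ccont_expi, ccont_inv_prod.
    apply cint_ext; intros t; unfold B, geo_term.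
    transitivity (Cmul (RtoC (lam m ^ k * (/ r) ^ (k + 1)))
                   (Cmul (Cmul (expi (- (INR k + 1) * t)) (expi (IZR p * t))) (inv_prod lam r m t)));
      [cplx_ring|].
    rewrite expi_add, !minus_IZR, <- INR_IZR_INZ; do 3 f_equal; ring.
Qed.

End InverseProduct.

(* Taylor bound for the complex exponential:
     |e^u - sum_{k<=N} u^k/k!| <= 2 e^{2|u|} |u|^{N+1} / N!.
   It is obtained from the mean value theorem applied to the components of
   g(s) = e^{-su} sum_{k<=N} (su)^k/k!, whose derivative
   -u e^{-su} (su)^N/N! is small, and g(0) = 1, e^u g(1) = sum u^k/k!. *)

Lemma rder_mult (f g : R -> R) (x df dg : R) : is_derive f x df -> is_derive g x dg ->
  is_derive (fun t => f t * g t) x (df * g x + f x * dg).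
Proof.
  intros H1 H2; apply is_derive_Reals; apply is_derive_Reals in H1, H2.
  exact (derivable_pt_lim_mult f g x df dg H1 H2).
Qed.
Lemma rder_plus (f g : R -> R) (x df dg : R) : is_derive f x df -> is_derive g x dg ->
  is_derive (fun t => f t + g t) x (df + dg).
Proof.
  intros H1 H2; apply is_derive_Reals; apply is_derive_Reals in H1, H2.
  exact (derivable_pt_lim_plus f g x df dg H1 H2).
Qed.
Lemma rder_minus (f g : R -> R) (x df dg : R) : is_derive f x df -> is_derive g x dg ->
  is_derive (fun t => f t - g t) x (df - dg).
Proof.
  intros H1 H2; apply is_derive_Reals; apply is_derive_Reals in H1, H2.
  exact (derivable_pt_lim_minus f g x df dg H1 H2).
Qed.
Lemma rder_const (c x : R) : is_derive (fun _ => c) x 0.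
Proof. apply is_derive_Reals, derivable_pt_lim_const. Qed.
Lemma rder_ext (f g : R -> R) (x d d' : R) :
  (forall t, f t = g t) -> is_derive f x d -> d = d' -> is_derive g x d'.
Proof. intros H Hd <-; apply (is_derive_ext f g); auto. Qed.

Definition cderiv (F F' : R -> Cplx) :=
  forall s, is_derive (fun s => fst (F s)) s (fst (F' s)) /\
            is_derive (fun s => snd (F s)) s (snd (F' s)).

Lemma cderiv_ext F G F' G' :
  (forall s, F s = G s) -> (forall s, F' s = G' s) -> cderiv F F' -> cderiv G G'.
Proof.
  intros H1 H2 HF s; destruct (HF s); split.
  - eapply (rder_ext (fun s => fst (F s))); eauto; [intros; rewrite H1|rewrite H2]; reflexivity.
  - eapply (rder_ext (fun s => snd (F s))); eauto; [intros; rewrite H1|rewrite H2]; reflexivity.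
Qed.
Lemma cderiv_add F F' G G' : cderiv F F' -> cderiv G G' ->
  cderiv (fun s => Cadd (F s) (G s)) (fun s => Cadd (F' s) (G' s)).
Proof. intros HF HG s; destruct (HF s), (HG s); simpl; split; apply rder_plus; auto. Qed.
Lemma cderiv_mul F F' G G' : cderiv F F' -> cderiv G G' ->
  cderiv (fun s => Cmul (F s) (G s)) (fun s => Cadd (Cmul (F' s) (G s)) (Cmul (F s) (G' s))).
Proof.
  intros HF HG s; destruct (HF s), (HG s); simpl; split.
  - eapply rder_ext; [intros; reflexivity|apply rder_minus; apply rder_mult; eauto|cbv beta; ring].
  - eapply rder_ext; [intros; reflexivity|apply rder_plus; apply rder_mult; eauto|cbv beta; ring].
Qed.
Lemma cderiv_real_scal f f' c : (forall s, is_derive f s (f' s)) ->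
  cderiv (fun s => Cmul (RtoC (f s)) c) (fun s => Cmul (RtoC (f' s)) c).
Proof.
  intros Hf s; unfold Cmul, RtoC; simpl; split.
  - eapply rder_ext;
      [intros; reflexivity|apply rder_minus; apply rder_mult; auto using rder_const|cbv beta; ring].
  - eapply rder_ext;
      [intros; reflexivity|apply rder_plus; apply rder_mult; auto using rder_const|cbv beta; ring].
Qed.

Fixpoint Cpow (u : Cplx) (k : nat) : Cplx :=
  match k with O => (1,0) | S j => Cmul u (Cpow u j) end.

Lemma Cnorm_Cpow u k : Cnorm (Cpow u k) = Cnorm u ^ k.
Proof.
  induction k; simpl; [|rewrite Cnorm_mul, IHk; auto].
  unfold Cnorm; simpl; rewrite Rmult_0_l, Rplus_0_r, Rmult_1_l; apply sqrt_1.
Qed.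
Lemma Cpow_RtoC x k : Cpow (RtoC x) k = RtoC (x^k).
Proof. induction k; simpl; auto; rewrite IHk; cplx_ring. Qed.

Definition exp_partial (u : Cplx) (N : nat) : Cplx :=
  csum (fun k => Cmul (RtoC (/ INR (fact k))) (Cpow u k)) N.
Definition exp_scaled (u : Cplx) (N : nat) (s : R) : Cplx :=
  csum (fun k => Cmul (RtoC (s^k / INR (fact k))) (Cpow u k)) N.
Definition exp_scaled_der (u : Cplx) (N : nat) (s : R) : Cplx :=
  match N with O => (0,0) | S M => Cmul u (exp_scaled u M s) end.

Lemma is_derive_pow_fact k s :
  is_derive (fun s => s^(S k) / INR (fact (S k))) s (s^k / INR (fact k)).
Proof.
  pose proof (INR_fact_lt_0 k).
  assert (Hp : is_derive (fun s => s^(S k)) s (INR (S k) * 1 * s^(pred (S k))))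
    by apply (is_derive_pow (fun s => s)), (is_derive_id s).
  eapply rder_ext; [intros; reflexivity|apply rder_mult; [apply Hp|apply rder_const]|].
  cbv beta; simpl pred; rewrite fact_simpl, mult_INR; field.
  split; [lra|rewrite S_INR; pose proof (pos_INR k); lra].
Qed.

Lemma exp_scaled_deriv u N : cderiv (exp_scaled u N) (exp_scaled_der u N).
Proof.
  induction N.
  - eapply cderiv_ext; [| |apply (cderiv_real_scal (fun s => s^0 / INR (fact 0)) (fun _ => 0) (Cpow u 0))].
    + intros s; reflexivity.
    + intros s; simpl; cplx_ring.
    + intros s; eapply rder_ext; [intros t; simpl; reflexivity|apply rder_const|auto].
  - eapply cderiv_ext; [| |apply cderiv_add;
      [apply IHN|apply (cderiv_real_scal (fun s => s^(S N) / INR (fact (S N)))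
                                          (fun s => s^N / INR (fact N)) (Cpow u (S N)));
                   intros s; apply is_derive_pow_fact]].
    + intros s; reflexivity.
    + intros s; destruct N; [unfold exp_scaled_der, exp_scaled; simpl; cplx_ring|].
      unfold exp_scaled_der; unfold exp_scaled at 2; simpl csum; fold (exp_scaled u N s); cplx_ring.
Qed.

Definition exp_neg (u : Cplx) (s : R) : Cplx :=
  (exp (-(s*fst u)) * cos (-(s*snd u)), exp (-(s*fst u)) * sin (-(s*snd u))).

Lemma exp_neg_deriv u : cderiv (exp_neg u) (fun s => Cmul (RtoC (-1)) (Cmul u (exp_neg u s))).
Proof. intros s; unfold exp_neg; simpl; split; auto_derive; auto; unfold Cmul, RtoC; simpl; ring. Qed.

Lemma Cnorm_exp_neg u s : Cnorm (exp_neg u s) = exp (-(s*fst u)).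
Proof. unfold exp_neg; rewrite Cnorm_polar; apply Rabs_right, Rle_ge, Rlt_le, exp_pos. Qed.
Lemma Cnorm_Cexp u : Cnorm (Cexp u) = exp (fst u).
Proof. unfold Cexp; rewrite Cnorm_polar; apply Rabs_right, Rle_ge, Rlt_le, exp_pos. Qed.

Definition exp_gap (u : Cplx) (N : nat) (s : R) : Cplx := Cmul (exp_neg u s) (exp_scaled u N s).
Definition exp_gap_der (u : Cplx) (N : nat) (s : R) : Cplx :=
  Cmul (RtoC (-1)) (Cmul u (Cmul (exp_neg u s) (Cmul (RtoC (s^N / INR (fact N))) (Cpow u N)))).

Lemma exp_gap_deriv u N : cderiv (exp_gap u N) (exp_gap_der u N).
Proof.
  eapply cderiv_ext; [| |apply cderiv_mul; [apply exp_neg_deriv|apply exp_scaled_deriv]].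
  - intros; reflexivity.
  - intros s; unfold exp_gap_der; destruct N.
    + unfold exp_scaled_der, exp_scaled; simpl; cplx_ring.
    + unfold exp_scaled_der; unfold exp_scaled at 1; simpl csum; fold (exp_scaled u N s); cplx_ring.
Qed.

Lemma exp_le x y : x <= y -> exp x <= exp y.
Proof. intros [H| ->]; [left; apply exp_increasing; auto|lra]. Qed.

Lemma exp_neg_bound u s : 0 <= s <= 1 -> exp (-(s * fst u)) <= exp (Cnorm u).
Proof.
  intros Hs; apply exp_le.
  pose proof (Rabs_fst_le u); pose proof (Rabs_maj2 (fst u)); pose proof (Rabs_pos (fst u)).
  assert (s * (- fst u) <= s * Rabs (fst u)) by (apply Rmult_le_compat_l; lra).
  assert (s * Rabs (fst u) <= Rabs (fst u)) by (rewrite <- (Rmult_1_l (Rabs (fst u))) at 2;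
                                               apply Rmult_le_compat_r; lra).
  lra.
Qed.

Lemma exp_gap_der_bound u N s : 0 <= s <= 1 ->
  Cnorm (exp_gap_der u N s) <= exp (Cnorm u) * Cnorm u ^ (S N) / INR (fact N).
Proof.
  intros Hs; unfold exp_gap_der.
  rewrite !Cnorm_mul, Cnorm_exp_neg, Cnorm_Cpow, !Cnorm_RtoC.
  pose proof (INR_fact_lt_0 N); pose proof (Cnorm_ge0 u).
  pose proof (exp_neg_bound u s Hs); pose proof (exp_pos (-(s * fst u))).
  assert (Hp : 0 <= s^N <= 1) by (split; [apply pow_le; lra|rewrite <- (pow1 N); apply pow_incr; lra]).
  assert (0 <= Cnorm u ^ N) by (apply pow_le; auto).
  assert (Hf : 0 < / INR (fact N)) by (apply Rinv_0_lt_compat; lra).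
  replace (Rabs (-1)) with 1 by (rewrite Rabs_left; lra).
  rewrite (Rabs_right (s ^ N / INR (fact N)))
    by (apply Rle_ge, Rmult_le_pos; lra).
  simpl pow; unfold Rdiv.
  assert (Hq : 0 <= s ^ N * / INR (fact N) <= / INR (fact N)) by (split; nra).
  apply Rle_trans with (Cnorm u * (exp (Cnorm u) * (/ INR (fact N) * Cnorm u ^ N)));
    [|right; ring].
  rewrite Rmult_1_l; apply Rmult_le_compat_l; auto.
  apply Rmult_le_compat; try lra; [apply Rmult_le_pos; lra|apply Rmult_le_compat_r; lra].
Qed.

Lemma mvt_bound (f f' : R -> R) K : (forall s, is_derive f s (f' s)) ->
  (forall s, 0 <= s <= 1 -> Rabs (f' s) <= K) -> Rabs (f 1 - f 0) <= K.
Proof.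
  intros Hd Hb; destruct (MVT_abs f f' 0 1) as [c [Hc Hc2]];
    [intros c _; apply is_derive_Reals; auto|].
  rewrite Hc; rewrite Rmin_left, Rmax_right in Hc2 by lra.
  rewrite Rminus_0_r, Rabs_R1, Rmult_1_r; apply Hb; lra.
Qed.

Lemma exp_gap_0 u N : exp_gap u N 0 = (1,0).
Proof.
  assert (HQ : exp_scaled u N 0 = (1,0)).
  { induction N; unfold exp_scaled; cbn [csum]; [unfold Cmul, RtoC; simpl; f_equal; field|].
    fold (exp_scaled u N 0); rewrite IHN, (pow_i (S N)) by lia.
    unfold Cadd, Cmul, RtoC; simpl; f_equal; unfold Rdiv; ring. }
  unfold exp_gap; rewrite HQ; unfold exp_neg.
  rewrite !Rmult_0_l, Ropp_0, exp_0, cos_0, sin_0; cplx_ring.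
Qed.

Lemma exp_gap_1 u N : Cmul (Cexp u) (exp_gap u N 1) = exp_partial u N.
Proof.
  assert (HQ : exp_scaled u N 1 = exp_partial u N).
  { apply csum_ext; intros k _; rewrite pow1; unfold Rdiv; rewrite Rmult_1_l; auto. }
  assert (HP : Cmul (Cexp u) (exp_neg u 1) = (1,0)).
  { unfold Cexp, exp_neg, Cmul; simpl; rewrite !Rmult_1_l, cos_neg, sin_neg.
    pose proof (sin2_cos2 (snd u)); unfold Rsqr in *.
    assert (Hee : exp (fst u) * exp (- fst u) = 1) by (rewrite <- exp_plus, Rplus_opp_r, exp_0; auto).
    f_equal; nra. }
  unfold exp_gap; rewrite HQ, <- Cmul_assoc, HP, Cmul_1_l; auto.
Qed.

Lemma exp_taylor_bound u N :
  Cnorm (Csub (Cexp u) (exp_partial u N))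
  <= exp (Cnorm u) * (2 * (exp (Cnorm u) * Cnorm u ^ (S N) / INR (fact N))).
Proof.
  set (K := exp (Cnorm u) * Cnorm u ^ (S N) / INR (fact N)).
  assert (H1 : Rabs (fst (exp_gap u N 1) - fst (exp_gap u N 0)) <= K).
  { apply (mvt_bound (fun s => fst (exp_gap u N s)) (fun s => fst (exp_gap_der u N s)));
      [intros s; apply exp_gap_deriv|].
    intros s Hs; eapply Rle_trans; [apply Rabs_fst_le|apply exp_gap_der_bound; auto]. }
  assert (H2 : Rabs (snd (exp_gap u N 1) - snd (exp_gap u N 0)) <= K).
  { apply (mvt_bound (fun s => snd (exp_gap u N s)) (fun s => snd (exp_gap_der u N s)));
      [intros s; apply exp_gap_deriv|].
    intros s Hs; eapply Rle_trans; [apply Rabs_snd_le|apply exp_gap_der_bound; auto]. }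
  rewrite Cnorm_sub_sym, <- exp_gap_1.
  replace (Csub (Cmul (Cexp u) (exp_gap u N 1)) (Cexp u))
    with (Cmul (Cexp u) (Csub (exp_gap u N 1) (exp_gap u N 0))) by (rewrite exp_gap_0; cplx_ring).
  rewrite Cnorm_mul; apply Rmult_le_compat; auto using Cnorm_ge0.
  - rewrite Cnorm_Cexp; apply exp_le.
    pose proof (Rabs_fst_le u); pose proof (Rle_abs (fst u)); lra.
  - eapply Rle_trans; [apply Cnorm_le_abs_sum|unfold Csub; cbn [fst snd]; lra].
Qed.

Definition taylor_coef (lam : nat -> R) (n k : nat) : R :=
  if (k <? n)%nat then 0 else hcomp lam (S n) (k - n) / INR (fact k).
Definition taylor_poly (lam : nat -> R) (n : nat) (z : Cplx) (N : nat) : Cplx :=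
  csum (fun k => Cmul (RtoC (taylor_coef lam n k)) (Cpow z k)) N.

Lemma max_abs_ge (lam : nat -> Cplx) n j : (j <= n)%nat -> Cnorm (lam j) <= max_abs lam n.
Proof.
  induction n; intros Hj; simpl; [replace j with 0%nat by lia; lra|].
  destruct (Nat.eq_dec j (S n)) as [->|]; [apply Rmax_r|].
  eapply Rle_trans; [apply IHn; lia|apply Rmax_l].
Qed.

Definition Phi_radius (lam : nat -> R) (n : nat) : R := max_abs (fun j => RtoC (lam j)) n + 1.

Lemma nodes_inside_Phi_radius (lam : nat -> R) n :
  (forall j, (j <= n)%nat -> 0 <= lam j) -> nodes_inside lam (Phi_radius lam n) (S n).
Proof.
  intros Hl j Hj; split; [apply Hl; lia|].
  pose proof (max_abs_ge (fun j => RtoC (lam j)) n j ltac:(lia)) as Hm; simpl in Hm.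
  rewrite Cnorm_RtoC, Rabs_right in Hm by (apply Rle_ge, Hl; lia); unfold Phi_radius; lra.
Qed.

Lemma pow_over_fact_small (rho C : R) : 0 <= C -> forall eps, 0 < eps ->
  exists N0, forall N, (N0 <= N)%nat -> C * (rho ^ N / INR (fact N)) <= eps.
Proof.
  intros HC eps He.
  destruct (cv_speed_pow_fact rho (eps / (C+1))) as [N0 HN0]; [apply Rdiv_lt_0_compat; lra|].
  exists N0; intros N HN; specialize (HN0 N HN); unfold R_dist in HN0; rewrite Rminus_0_r in HN0.
  apply Rle_trans with (C * (eps / (C+1))).
  - apply Rmult_le_compat_l; auto; apply Rlt_le; eapply Rle_lt_trans; [apply Rle_abs|auto].
  - apply Rmult_le_reg_r with (C+1); [lra|].
    replace (C * (eps / (C + 1)) * (C + 1)) with (C * eps) by (field; lra); nra.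
Qed.

Lemma exp_series_unif_circ (z : Cplx) (r : R) : 0 <= r ->
  Cunif (fun N t => exp_partial (Cmul z (circ r t)) N) (fun t => Cexp (Cmul z (circ r t))).
Proof.
  intros Hr e He.
  set (rho := Cnorm z * r).
  assert (Hrho : 0 <= rho) by (apply Rmult_le_pos; [apply Cnorm_ge0|auto]).
  destruct (pow_over_fact_small rho (2 * exp rho * exp rho * rho)) with (eps := e)
    as [N0 HN0]; auto.
  { pose proof (exp_pos rho); apply Rmult_le_pos; auto; nra. }
  exists N0; intros N HN t; specialize (HN0 N HN).
  assert (Hu : Cnorm (Cmul z (circ r t)) = rho) by (unfold rho; rewrite Cnorm_mul, Cnorm_circ; lra).
  eapply Rle_trans; [apply exp_taylor_bound|rewrite Hu].
  eapply Rle_trans; [|apply HN0]; right; simpl pow; unfold Rdiv; ring.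
Qed.

Lemma Cpow_circ z r t k :
  Cpow (Cmul z (circ r t)) k = Cmul (Cpow z k) (Cmul (RtoC (r^k)) (expi (INR k * t))).
Proof.
  induction k; cbn [Cpow].
  - rewrite Rmult_0_l; unfold expi; rewrite cos_0, sin_0; cplx_ring.
  - rewrite IHk, S_INR, Rmult_plus_distr_r, Rmult_1_l, Rplus_comm, <- expi_add; unfold circ; cplx_ring.
Qed.

Section TaylorExpansion.

Variables (lam : nat -> R) (n : nat) (r : R).
Hypothesis r_pos : 0 < r.
Hypothesis inside : nodes_inside lam r (S n).

Lemma cint_taylor_term z k :
  cint (fun t => Cmul (Cmul (RtoC (/ INR (fact k))) (Cpow (Cmul z (circ r t)) k))
                      (Cmul (circ r t) (inv_prod lam r (S n) t)))
  = Cmul (RtoC (2*PI)) (Cmul (RtoC (taylor_coef lam n k)) (Cpow z k)).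
Proof.
  rewrite (cint_ext _ (fun t => Cmul (Cmul (RtoC (/ INR (fact k) * r^(S k))) (Cpow z k))
                                   (Cmul (expi (IZR (Z.of_nat (S k)) * t)) (inv_prod lam r (S n) t)))).
  2:{ intros t; rewrite Cpow_circ; unfold circ.
      rewrite <- INR_IZR_INZ, S_INR, Rmult_plus_distr_r, Rmult_1_l, <- expi_add; simpl pow; cplx_ring. }
  rewrite cint_cmul by (apply ccont_mul; [apply ccont_expi|apply ccont_inv_prod; auto]).
  rewrite cint_inv_prod by auto; unfold inv_prod_coef, taylor_coef.
  destruct (Nat.ltb_spec k n); destruct (Z.ltb_spec (Z.of_nat (S k)) (Z.of_nat (S n))); try lia;
    [cplx_ring|].
  replace (Z.to_nat (Z.of_nat (S k) - Z.of_nat (S n))) with (k - n)%nat by lia.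
  rewrite Nat2Z.id.
  assert (Hp : r ^ S k * (/ r) ^ S k = 1) by (rewrite <- Rpow_mult_distr, Rinv_r, pow1; lra).
  destruct (Cpow z k) as [a b]; unfold Cmul, RtoC; cbn [fst snd].
  unfold Rdiv; f_equal;
    [transitivity (2 * PI * (hcomp lam (S n) (k - n) * / INR (fact k)) * a * (r ^ S k * (/ r) ^ S k))
    |transitivity (2 * PI * (hcomp lam (S n) (k - n) * / INR (fact k)) * b * (r ^ S k * (/ r) ^ S k))];
    try ring; rewrite Hp; ring.
Qed.

End TaylorExpansion.

Lemma Phi_as_cint lam n z : (forall j, (j <= n)%nat -> 0 <= lam j) ->
  Phi (fun j => RtoC (lam j)) n z
  = Cmul (RtoC (/ (2*PI)))
         (cint (fun t => Cmul (Cexp (Cmul z (circ (Phi_radius lam n) t)))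
                              (Cmul (circ (Phi_radius lam n) t) (inv_prod lam (Phi_radius lam n) (S n) t)))).
Proof.
  intros Hl; set (r := Phi_radius lam n).
  assert (Hy : nodes_inside lam r (S n)) by (apply nodes_inside_Phi_radius, Hl).
  set (A := fun t => Cexp (Cmul z (circ r t))).
  set (B := fun t => Cmul (circ r t) (inv_prod lam r (S n) t)).
  assert (HA : ccont A) by (apply ccont_Cexp, ccont_mul; [apply ccont_const|apply ccont_circ]).
  assert (HB : ccont B) by (apply ccont_mul; [apply ccont_circ|apply ccont_inv_prod; auto]).
  assert (Hint : forall t, Cmul (Cdiv (Cexp (Cmul z (circ r t))) (prod_lin (fun j => RtoC (lam j)) n (circ r t)))
                                (Cmul Ci (circ r t)) = Cmul Ci (Cmul (A t) (B t)))
    by (intros t; unfold Cdiv; rewrite prod_lin_nodes; unfold A, B, inv_prod;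
        destruct (Cexp _), (Defs.Cinv _), (circ r t); unfold Cmul, Ci; simpl; f_equal; ring).
  unfold Phi; fold (Phi_radius lam n) r.
  rewrite circle_integral_cint, (cint_ext _ _ Hint), cint_cmul, <- Cmul_assoc;
    [|apply ccont_mul; auto|apply (ccont_ext _ _ (fun t => eq_sym (Hint t)));
                            apply ccont_mul; [apply ccont_const|apply ccont_mul; auto]].
  f_equal; unfold Defs.Cinv, Ci, Cmul, RtoC; simpl; pose proof PI_RGT_0; f_equal; field; lra.
Qed.

(* Phi is the limit of its Taylor polynomials: expand e^{zw} in its
   exponential series, uniformly on the circle, and integrate term by term. *)
Lemma Phi_taylor lam n z : (forall j, (j <= n)%nat -> 0 <= lam j) ->
  Clim (taylor_poly lam n z) (Phi (fun j => RtoC (lam j)) n z).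
Proof.
  intros Hl eps He; rewrite Phi_as_cint by auto.
  set (r := Phi_radius lam n).
  assert (Hy : nodes_inside lam r (S n)) by (apply nodes_inside_Phi_radius, Hl).
  assert (Hr : 0 < r) by (destruct (Hy O ltac:(lia)); lra).
  set (A := fun t => Cexp (Cmul z (circ r t))).
  set (B := fun t => Cmul (circ r t) (inv_prod lam r (S n) t)).
  set (term := fun k t => Cmul (RtoC (/ INR (fact k))) (Cpow (Cmul z (circ r t)) k)).
  assert (HA : ccont A) by (apply ccont_Cexp, ccont_mul; [apply ccont_const|apply ccont_circ]).
  assert (HB : ccont B) by (apply ccont_mul; [apply ccont_circ|apply ccont_inv_prod; auto]).
  assert (Hterm : forall k, ccont (term k)).
  { intros k; apply ccont_mul; [apply ccont_const|].
    induction k; simpl; [apply ccont_const|apply ccont_mul; auto].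
    apply ccont_mul; [apply ccont_const|apply ccont_circ]. }
  assert (HBn : forall t, Cnorm (B t) <= r).
  { intros t; unfold B; rewrite Cnorm_mul, Cnorm_circ by lra.
    pose proof (inv_prod_norm lam r (S n) t Hy); pose proof (Cnorm_ge0 (inv_prod lam r (S n) t)); nra. }
  assert (Hpi : 0 < 2 * PI) by (pose proof PI_RGT_0; lra).
  destruct (cint_series A B term r HA HB Hterm HBn (exp_series_unif_circ z r ltac:(lra))
              (2*PI*eps) ltac:(nra)) as [N0 HN0].
  exists N0; intros N HN; specialize (HN0 N HN).
  rewrite (csum_ext _ (fun k => Cmul (RtoC (2*PI)) (Cmul (RtoC (taylor_coef lam n k)) (Cpow z k))))
    in HN0 by (intros k _; apply cint_taylor_term; auto).
  rewrite csum_mul_l in HN0; fold (taylor_poly lam n z N) in HN0.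
  change (Cnorm (Csub (Cmul (RtoC (/ (2 * PI))) (cint (fun t => Cmul (A t) (B t))))
                      (taylor_poly lam n z N)) <= eps).
  replace (Csub (Cmul (RtoC (/ (2 * PI))) (cint (fun t => Cmul (A t) (B t)))) (taylor_poly lam n z N))
    with (Cmul (RtoC (/ (2 * PI)))
               (Csub (cint (fun t => Cmul (A t) (B t))) (Cmul (RtoC (2 * PI)) (taylor_poly lam n z N))))
    by (unfold Cmul, Csub, RtoC; simpl; f_equal; field; lra).
  rewrite Cnorm_mul, Cnorm_RtoC, Rabs_right by (apply Rle_ge; left; apply Rinv_0_lt_compat; lra).
  apply Rmult_le_reg_l with (2*PI); [lra|].
  rewrite <- Rmult_assoc, Rinv_r, Rmult_1_l by lra; lra.
Qed.

Lemma hcomp_0 lam m : hcomp lam m 0 = 1.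
Proof. induction m; simpl; auto; rewrite IHm; ring. Qed.

Lemma hcomp_mono lam mu m : (forall j, (j < m)%nat -> 0 <= lam j <= mu j) ->
  forall q, 0 <= hcomp lam m q <= hcomp mu m q.
Proof.
  induction m; intros H q; simpl; [destruct (Nat.eqb q 0); lra|].
  assert (IH := IHm ltac:(intros j Hj; apply H; lia)); assert (Hm := H m ltac:(lia)).
  split.
  - apply cond_pos_sum; intros k; apply Rmult_le_pos; [apply pow_le; lra|apply IH].
  - apply sum_Rle; intros k _; apply Rmult_le_compat;
      [apply pow_le; lra|apply IH|apply pow_incr; lra|apply IH].
Qed.

Lemma taylor_coef_mono lam mu n k : (forall j, (j <= n)%nat -> 0 <= lam j <= mu j) ->
  0 <= taylor_coef lam n k <= taylor_coef mu n k.
Proof.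
  intros H; unfold taylor_coef; destruct (Nat.ltb k n); [lra|].
  pose proof (INR_fact_lt_0 k).
  pose proof (hcomp_mono lam mu (S n) ltac:(intros j Hj; apply H; lia) (k - n)).
  assert (0 < / INR (fact k)) by (apply Rinv_0_lt_compat; lra).
  unfold Rdiv; nra.
Qed.

Lemma taylor_coef_nonneg lam n k : (forall j, (j <= n)%nat -> 0 <= lam j) ->
  0 <= taylor_coef lam n k.
Proof. intros H; apply (taylor_coef_mono lam lam); intros j Hj; specialize (H j Hj); lra. Qed.

Lemma taylor_coef_n lam n : taylor_coef lam n n = / INR (fact n).
Proof. unfold taylor_coef; rewrite Nat.ltb_irrefl, Nat.sub_diag, hcomp_0; unfold Rdiv; ring. Qed.

Lemma taylor_poly_real lam n x N :
  taylor_poly lam n (RtoC x) N = RtoC (sum_f_R0 (fun k => taylor_coef lam n k * x^k) N).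
Proof.
  unfold taylor_poly; rewrite <- csum_RtoC; apply csum_ext; intros k _.
  rewrite Cpow_RtoC; cplx_ring.
Qed.

Lemma taylor_poly_norm lam n z N : (forall j, (j <= n)%nat -> 0 <= lam j) ->
  Cnorm (taylor_poly lam n z N) <= sum_f_R0 (fun k => taylor_coef lam n k * Cnorm z ^ k) N.
Proof.
  intros H; eapply Rle_trans; [apply Cnorm_csum|right; apply sum_eq; intros k _].
  rewrite Cnorm_mul, Cnorm_RtoC, Cnorm_Cpow, Rabs_right; auto.
  apply Rle_ge, taylor_coef_nonneg, H.
Qed.

Lemma sum_f_R0_ge_term f N j : (forall k, 0 <= f k) -> (j <= N)%nat -> f j <= sum_f_R0 f N.
Proof.
  intros H; induction N; intros Hj; simpl; [replace j with 0%nat by lia; lra|].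
  destruct (Nat.eq_dec j (S N)) as [->|]; [pose proof (cond_pos_sum f N H); lra|].
  pose proof (IHN ltac:(lia)); pose proof (H (S N)); lra.
Qed.

Lemma Clim_RtoC (s : nat -> R) L : Clim (fun N => RtoC (s N)) L ->
  snd L = 0 /\ forall eps, 0 < eps -> exists N0, forall N, (N0 <= N)%nat -> Rabs (fst L - s N) <= eps.
Proof.
  intros H; split.
  - destruct (Req_dec (snd L) 0) as [|Hne]; auto; exfalso.
    pose proof (Rabs_pos_lt _ Hne).
    destruct (H (Rabs (snd L) / 2)) as [N0 HN0]; [lra|].
    specialize (HN0 N0 (le_n _)); pose proof (Rabs_snd_le (Csub L (RtoC (s N0)))).
    unfold Csub, RtoC in *; simpl in *; rewrite Rminus_0_r in *; lra.
  - intros eps He; destruct (H eps He) as [N0 HN0]; exists N0; intros N HN.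
    eapply Rle_trans; [apply (Rabs_fst_le (Csub L (RtoC (s N))))|auto].
Qed.

Section Consequences.

Variables (n : nat) (lam : nat -> R).
Hypothesis lam_ge0 : forall j, (j <= n)%nat -> 0 <= lam j.

Lemma Phi_taylor_real x :
  Clim (fun N => RtoC (sum_f_R0 (fun k => taylor_coef lam n k * x^k) N))
       (Phi (fun j => RtoC (lam j)) n (RtoC x)).
Proof.
  intros eps He; destruct (Phi_taylor lam n (RtoC x) lam_ge0 eps He) as [N0 HN0].
  exists N0; intros N HN; rewrite <- taylor_poly_real; auto.
Qed.

Lemma Phi_real_on_reals x : Im (Phi (fun j => RtoC (lam j)) n (RtoC x)) = 0.
Proof. apply (Clim_RtoC _ _ (Phi_taylor_real x)). Qed.

(* For x > 0 every Taylor polynomial of degree >= n is at least x^n / n!. *)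
Lemma Phi_pos x : 0 < x -> 0 < Re (Phi (fun j => RtoC (lam j)) n (RtoC x)).
Proof.
  intros Hx; unfold Defs.Re.
  set (c := x ^ n / INR (fact n)).
  assert (Hc : 0 < c) by (apply Rdiv_lt_0_compat; [apply pow_lt; auto|apply INR_fact_lt_0]).
  destruct (proj2 (Clim_RtoC _ _ (Phi_taylor_real x)) (c/2) ltac:(lra)) as [N0 HN0].
  specialize (HN0 (Nat.max N0 n) ltac:(lia)).
  assert (Hs : c <= sum_f_R0 (fun k => taylor_coef lam n k * x ^ k) (Nat.max N0 n)).
  { replace c with (taylor_coef lam n n * x ^ n) by (rewrite taylor_coef_n; unfold c, Rdiv; ring).
    apply (sum_f_R0_ge_term (fun k => taylor_coef lam n k * x ^ k)); [|lia].
    intros k; apply Rmult_le_pos; [apply taylor_coef_nonneg; auto|apply pow_le; lra]. }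
  pose proof (Rle_abs (- (fst (Phi (fun j => RtoC (lam j)) n (RtoC x))
                          - sum_f_R0 (fun k => taylor_coef lam n k * x ^ k) (Nat.max N0 n)))).
  rewrite Rabs_Ropp in *; lra.
Qed.

End Consequences.

(* Domination: |Phi_lam(z)| <= sum_k c_k(lam) |z|^k <= sum_k c_k(mu) |z|^k
   = Phi_mu(|z|), up to arbitrarily small errors. *)
Lemma Phi_dominated n (lam mu : nat -> R) z :
  (forall j, (j <= n)%nat -> 0 <= lam j /\ lam j <= mu j) ->
  Cnorm (Phi (fun j => RtoC (lam j)) n z) <= Re (Phi (fun j => RtoC (mu j)) n (RtoC (Cnorm z))).
Proof.
  intros H.
  assert (Hl : forall j, (j <= n)%nat -> 0 <= lam j) by (intros j Hj; apply H; auto).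
  assert (Hm : forall j, (j <= n)%nat -> 0 <= mu j) by (intros j Hj; pose proof (H j Hj); lra).
  apply Rle_plus_epsilon; intros eps He; unfold Defs.Re.
  destruct (Phi_taylor lam n z Hl (eps/2) ltac:(lra)) as [N1 HN1].
  destruct (proj2 (Clim_RtoC _ _ (Phi_taylor_real n mu Hm (Cnorm z))) (eps/2) ltac:(lra))
    as [N2 HN2].
  set (N := Nat.max N1 N2).
  specialize (HN1 N ltac:(unfold N; lia)); specialize (HN2 N ltac:(unfold N; lia)).
  set (P1 := Phi (fun j => RtoC (lam j)) n z) in *.
  set (P2 := Phi (fun j => RtoC (mu j)) n (RtoC (Cnorm z))) in *.
  assert (Htri : Cnorm P1 <= Cnorm (Csub P1 (taylor_poly lam n z N)) + Cnorm (taylor_poly lam n z N)).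
  { replace P1 with (Cadd (Csub P1 (taylor_poly lam n z N)) (taylor_poly lam n z N)) at 1
      by (destruct P1, (taylor_poly lam n z N); unfold Cadd, Csub; simpl; f_equal; ring).
    apply Cnorm_add. }
  assert (Hsum : sum_f_R0 (fun k => taylor_coef lam n k * Cnorm z ^ k) N
                 <= sum_f_R0 (fun k => taylor_coef mu n k * Cnorm z ^ k) N).
  { apply sum_Rle; intros k _; apply Rmult_le_compat_r;
      [apply pow_le, Cnorm_ge0|apply taylor_coef_mono; auto]. }
  pose proof (taylor_poly_norm lam n z N Hl).
  pose proof (Rle_abs (- (fst P2 - sum_f_R0 (fun k => taylor_coef mu n k * Cnorm z ^ k) N))).
  rewrite Rabs_Ropp in *; lra.
Qed.

Theorem mainTheorem5 (n : nat) (lam mu : nat -> R)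
  (H : forall j : nat, (j <= n)%nat -> 0 <= lam j /\ lam j <= mu j) :
  (forall x : R, Im (Phi (fun j => RtoC (lam j)) n (RtoC x)) = 0) /\
  (forall x : R, 0 < x -> 0 < Re (Phi (fun j => RtoC (lam j)) n (RtoC x))) /\
  (forall z : Cplx,
     Cnorm (Phi (fun j => RtoC (lam j)) n z)
     <= Re (Phi (fun j => RtoC (mu j)) n (RtoC (Cnorm z)))).
Proof.
  assert (Hl : forall j, (j <= n)%nat -> 0 <= lam j) by (intros j Hj; apply H; auto).
  split; [|split].
  - apply Phi_real_on_reals, Hl.
  - apply Phi_pos, Hl.
  - intros z; apply Phi_dominated, H.
Qed.
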